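(* For every $p\in\mathbb{N}$ and $A,B\in\mathbb{R}^{n\times n}$: (i) $\|AB\|_{b,p}\le\|A\|_{S_\infty}\|B\|_{b,p}$; (ii) $\|A\|_{S_\infty}\le\|A\|_{b,p}$, and $\|A\|_{b,\infty}=\|A\|_{S_\infty}$; (iii) $\|A\|_{b,p}\le m^{1/p}\|A\|_{S_\infty}$; (iv) if $C\in\mathbb{R}^{n\times n}$ is block upper triangular with $C(0{:}j,j)=B_jA(0{:}j,j)$ for some $B_j\in\mathbb{R}^{n_{j+1}\times n_{j+1}}$, $j=0,\dots,m-1$, then $\|C\|_{b,2}\le\big(\max_{j=0,\dots,m-1}\|B_j\|_{S_\infty}\big)\|A\|_{b,2}$.
   Context: Fix a block structure $0=n_0<n_1<\dots<n_m=n$. Block $(i,j)$, $0\le i,j\le m-1$, of a matrix in $\mathbb{R}^{n\times n}$ consists of rows $n_i+1..n_{i+1}$ and columns $n_j+1..n_{j+1}$; $A(0{:}j,j)$ denotes the block column $j$ restricted to block rows $0..j$ (an $n_{j+1}\times(n_{j+1}-n_j)$ matrix). $\mathcal{D}_b\subset\mathbb{R}^{n\times m}$ is the set of $X$ with $X_{ij}=0$ whenever $i\notin[n_{j-1}+1,n_j]$. For $p\in\mathbb{N}\cup\{\infty\}$, $\|A\|_{b,p}:=\sup\{\|AX\|_{S_p}:X\in\mathcal{D}_b,\ \|X\|_{S_\infty}\le1\}$, where $\|\cdot\|_{S_p}$ is the Schatten $p$-norm (sum of $p$-th powers of singular values to the power $1/p$; $S_\infty$ is the spectral norm). *)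

From HB Require Import structures.
From mathcomp Require Import all_boot all_order all_algebra.
From mathcomp Require Import all_classical all_reals all_analysis.
Set Implicit Arguments. Unset Strict Implicit. Unset Printing Implicit Defensive.
Import Order.TTheory GRing.Theory Num.Theory.
Local Open Scope classical_set_scope.
Local Open Scope ring_scope.

Inductive sidx := SFin of nat | SInf.

Section Defs.
Variable R : realType.

(* s is the list of singular values of A : 'M_(r,c) (padded with zeros to
   length c): the nonnegative square roots of the eigenvalues of A^T A,
   counted with algebraic multiplicity. *)
Definition is_svals r c (A : 'M[R]_(r, c)) (s : seq R) : Prop :=
  [/\ size s = c, all (fun x => 0 <= x) s &
      char_poly (A^T *m A) = \prod_(x <- s) ('X - (x ^+ 2)%:P)].

Definition svals r c (A : 'M[R]_(r, c)) : seq R := xget [::] (is_svals A).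

Definition schatten (p : sidx) r c (A : 'M[R]_(r, c)) : R :=
  match p with
  | SFin k => powR (\sum_(x <- svals A) x ^+ k) (k%:R)^-1
  | SInf => \big[Num.max/0]_(x <- svals A) x
  end.

Definition block_struct (n m : nat) (nb : nat -> nat) : Prop :=
  [/\ nb 0%N = 0%N, nb m = n & forall i, (i < m)%N -> (nb i < nb i.+1)%N].

(* D_b : X_{ij} = 0 unless row i lies in block j (0-based indices) *)
Definition in_Db n m (nb : nat -> nat) (X : 'M[R]_(n, m)) : Prop :=
  forall (i : 'I_n) (j : 'I_m), ~~ ((nb j <= i)%N && (i < nb j.+1)%N) -> X i j = 0.

Definition bnorm (p : sidx) n m (nb : nat -> nat) (A : 'M[R]_n) : R :=
  sup [set schatten p (A *m X) | X in [set X : 'M[R]_(n, m) | in_Db nb X /\ schatten SInf X <= 1]].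

(* nat-indexed matrix entry (0 outside the range) *)
Definition mxe r c (M : 'M[R]_(r, c)) (i j : nat) : R :=
  oapp (fun i' : 'I_r => oapp (fun j' : 'I_c => M i' j') 0 (insub j)) 0 (insub i).

End Defs.

(* A Schatten norm of a real matrix M is a function of the singular values of M, i.e.
   of the eigenvalues of M^T M.  The library spectral theorem is stated for normal
   complex matrices, so we unitarily diagonalise the complexified Gram matrix and read
   off its eigenvalues [eig M i], which are real and nonnegative.  From the
   diagonalisation we obtain
   - the Rayleigh bound |M v|^2 <= eigmax M |v|^2, attained by a real unit vector;
   - a min-max comparison: if |M v| <= a |N v| for all v, then above every threshold
     M^T M has at most as many eigenvalues as a^2 N^T N;
   - closed forms ||M||_oo = sqrt (eigmax M), ||M||_p^p = \sum_i sqrt (eig M i)^p and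
     ||M||_2^2 = \sum_(j,i) M_ji^2, hence ||M||_oo <= ||M||_p <= c^(1/p) ||M||_oo and,
     by majorisation, ||A Y||_p <= ||A||_oo ||Y||_p.  Parts (i) and (iii)
   are uniform bounds over that ball; part (ii) uses an explicit X in the ball with
   ||A X||_oo >= ||A||_oo, obtained by normalising the blocks of a top right singular
   vector of A; part (iv) compares C X and A X column by column in Frobenius norm. *)

From HB Require Import structures.
From mathcomp Require Import all_boot all_order all_algebra.
From mathcomp Require Import all_classical all_reals all_analysis.
From mathcomp Require Import complex spectral zify lra.
Import Order.TTheory GRing.Theory Num.Theory.
Set Implicit Arguments. Unset Strict Implicit. Unset Printing Implicit Defensive.
Local Open Scope ring_scope.

Local Notation opn M := (schatten SInf M).

Section ComplexifiedGram.
Variable R : realType.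
Local Notation C := (R[i]).
Local Notation toC := (real_complex R).
Local Notation ReC := (@complex.Re R).
Local Notation ImC := (@complex.Im R).
Local Open Scope sesquilinear_scope.

Definition cabs2 (z : C) : R := ReC z ^+ 2 + ImC z ^+ 2.

Lemma cabs2_ge0 z : 0 <= cabs2 z.
Proof. by rewrite addr_ge0 // sqr_ge0. Qed.

Lemma mul_conj_cabs2 (z : C) : z * Num.conj z = toC (cabs2 z).
Proof. by rewrite /cabs2 add_Re2_Im2 sqr_normc. Qed.

Lemma cabs2_eq0 z : (cabs2 z == 0) = (z == 0).
Proof.
apply/idP/idP => [|/eqP->]; last by rewrite /cabs2 expr0n /= addr0.
rewrite /cabs2 paddr_eq0 ?sqr_ge0 // !sqrf_eq0 => /andP[/eqP re0 /eqP im0].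
by case: z re0 im0 => a b /= -> ->.
Qed.

Definition cnorm2 k (w : 'rV[C]_k) : R := \sum_i cabs2 (w 0 i).
Definition rnorm2 k (v : 'rV[R]_k) : R := \sum_i v 0 i ^+ 2.

Lemma cnorm2E k (w : 'rV[C]_k) : (w *m w ^t*) 0 0 = toC (cnorm2 w).
Proof.
rewrite !mxE rmorph_sum; apply: eq_bigr => i _.
by rewrite !mxE mul_conj_cabs2.
Qed.

Lemma cnorm2_ge0 k (w : 'rV[C]_k) : 0 <= cnorm2 w.
Proof. by rewrite sumr_ge0 // => i _; exact: cabs2_ge0. Qed.

Lemma rnorm2_ge0 k (v : 'rV[R]_k) : 0 <= rnorm2 v.
Proof. by rewrite sumr_ge0 // => i _; rewrite sqr_ge0. Qed.

Lemma rnorm2Z k (a : R) (v : 'rV[R]_k) : rnorm2 (a *: v) = a ^+ 2 * rnorm2 v.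
Proof. by rewrite /rnorm2 mulr_sumr; apply: eq_bigr => i _; rewrite mxE exprMn. Qed.

Lemma cnorm2_unitary k l (w : 'rV[C]_k) (U : 'M[C]_(k, l)) :
  U \is unitarymx -> cnorm2 (w *m U) = cnorm2 w.
Proof.
move=> /unitarymxP UU; apply: complexI; rewrite -!cnorm2E.
by rewrite trmx_mul map_mxM mulmxA -(mulmxA w) UU mulmx1.
Qed.

Definition cmx r c (M : 'M[R]_(r, c)) : 'M[C]_(r, c) := map_mx toC M.
Definition remx r c (M : 'M[C]_(r, c)) : 'M[R]_(r, c) := map_mx ReC M.
Definition immx r c (M : 'M[C]_(r, c)) : 'M[R]_(r, c) := map_mx ImC M.

Lemma cmx_conj r c (M : 'M[R]_(r, c)) : (cmx M) ^ Num.conj = cmx M.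
Proof. by apply/matrixP => i j; rewrite !mxE; exact: conjc_real. Qed.

Lemma cnorm2_cmx k (v : 'rV[R]_k) : cnorm2 (cmx v) = rnorm2 v.
Proof.
by apply: eq_bigr => i _; rewrite /cabs2 !mxE /= expr0n /= addr0.
Qed.

Lemma cnorm2_mul_cmx k l (u : 'rV[C]_k) (K : 'M[R]_(k, l)) :
  cnorm2 (u *m cmx K) = rnorm2 (remx u *m K) + rnorm2 (immx u *m K).
Proof.
rewrite /cnorm2 /rnorm2 -big_split; apply: eq_bigr => j _; rewrite /cabs2 !mxE.
rewrite raddf_sum [ImC _]raddf_sum /=.
have ReM (z : C) a : ReC (z * toC a) = ReC z * a by case: z => x y; simpc.
have ImM (z : C) a : ImC (z * toC a) = ImC z * a by case: z => x y; simpc.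
by congr (_ ^+ 2 + _ ^+ 2); apply: eq_bigr => i _; rewrite !mxE ?ReM ?ImM.
Qed.

Lemma cnorm2_split k (u : 'rV[C]_k) : cnorm2 u = rnorm2 (remx u) + rnorm2 (immx u).
Proof. by have := cnorm2_mul_cmx u 1%:M; rewrite /cmx map_mx1 !mulmx1. Qed.

Definition gram r c (M : 'M[R]_(r, c)) : 'M[C]_c := (cmx M)^T *m cmx M.
Definition eigvecs r c (M : 'M[R]_(r, c)) := spectralmx (gram M).
Definition eigdiag r c (M : 'M[R]_(r, c)) := spectral_diag (gram M).

Lemma eigvecs_unitary r c (M : 'M[R]_(r, c)) : eigvecs M \is unitarymx.
Proof. exact: spectral_unitarymx. Qed.

(* A square matrix with orthonormal rows also has orthonormal columns. *)
Lemma eigvecs_left r c (M : 'M[R]_(r, c)) : (eigvecs M) ^t* *m eigvecs M = 1%:M.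
Proof. by apply: mulmx1C; apply/unitarymxP; exact: eigvecs_unitary. Qed.

Lemma gram_spectral r c (M : 'M[R]_(r, c)) :
  gram M = (eigvecs M) ^t* *m diag_mx (eigdiag M) *m eigvecs M.
Proof.
have normal_gram : gram M \is normalmx.
  by apply/normalmxP; rewrite /gram trmx_mul trmxK map_mxM -map_trmx cmx_conj.
by rewrite {1}(orthomx_spectralP normal_gram) invmx_unitary // eigvecs_unitary.
Qed.

Lemma gram_diag r c (M : 'M[R]_(r, c)) :
  eigvecs M *m gram M *m (eigvecs M) ^t* = diag_mx (eigdiag M).
Proof.
have /unitarymxP UU := eigvecs_unitary M.
by rewrite gram_spectral !mulmxA UU mul1mx -mulmxA UU mulmx1.
Qed.

Lemma gram_form r c (M : 'M[R]_(r, c)) (u : 'rV[C]_c) :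
  (u *m gram M *m u ^t*) 0 0 = toC (cnorm2 (u *m (cmx M)^T)).
Proof. by rewrite -cnorm2E /gram trmx_mul map_mxM trmxK cmx_conj !mulmxA. Qed.

(* Eigenvalues of M^T M: real because eigdiag M 0 i = |M (eigvecs M)_i|^2. *)
Definition eig r c (M : 'M[R]_(r, c)) (i : 'I_c) : R := ReC (eigdiag M 0 i).

Lemma eigdiag_form r c (M : 'M[R]_(r, c)) i :
  eigdiag M 0 i = toC (cnorm2 (row i (eigvecs M) *m (cmx M)^T)).
Proof.
have := congr1 (fun D : 'M[C]_c => D i i) (gram_diag M).
rewrite /= [in RHS]mxE eqxx mulr1n => <-; rewrite -gram_form !mxE.
by apply: eq_bigr => j _; rewrite !mxE; congr (_ * _); apply: eq_bigr => l _; rewrite !mxE.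
Qed.

Lemma eigdiagE r c (M : 'M[R]_(r, c)) i : eigdiag M 0 i = toC (eig M i).
Proof. by rewrite /eig eigdiag_form. Qed.

Lemma eig_ge0 r c (M : 'M[R]_(r, c)) i : 0 <= eig M i.
Proof. by rewrite /eig eigdiag_form; exact: cnorm2_ge0. Qed.

Lemma rowsub_sandwich k l c (f : 'I_k -> 'I_l) (U : 'M[C]_(l, c)) (G : 'M[C]_c) :
  rowsub f U *m G *m (rowsub f U) ^t* = mxsub f f (U *m G *m U ^t*).
Proof.
apply/matrixP => i j; rewrite !mxE; apply: eq_bigr => x _; rewrite !mxE.
by congr (_ * _); apply: eq_bigr => y _; rewrite !mxE.
Qed.

Lemma rowsub_unitary k c (f : 'I_k -> 'I_c) (U : 'M[C]_c) : injective f ->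
  U \is unitarymx -> rowsub f U \is unitarymx.
Proof.
move=> f_inj /unitarymxP UU; apply/unitarymxP.
have := rowsub_sandwich f U 1%:M; rewrite !mulmx1 => ->; rewrite UU.
by apply/matrixP => i j; rewrite !mxE (inj_eq f_inj).
Qed.

Lemma eigen_coords_form r c k (M : 'M[R]_(r, c)) (f : 'I_k -> 'I_c) (a : 'rV[C]_k) :
  injective f ->
  cnorm2 (a *m rowsub f (eigvecs M) *m (cmx M)^T) = \sum_i eig M (f i) * cabs2 (a 0 i).
Proof.
move=> f_inj; apply: complexI.
rewrite -gram_form trmx_mul map_mxM (mulmxA (a *m _ *m gram M)).
rewrite -(mulmxA a) -(mulmxA a) rowsub_sandwich gram_diag rmorph_sum !mxE.
apply: eq_bigr => i _; rewrite !mxE.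
rewrite (bigD1 i) //= big1 ?addr0; last first.
  by move=> j /negbTE ji; rewrite !mxE (inj_eq f_inj) ji mulr0n mulr0.
by rewrite !mxE eqxx mulr1n eigdiagE mulrAC mul_conj_cabs2 mulrC rmorphM.
Qed.

End ComplexifiedGram.

Section Rayleigh.
Variable R : realType.
Local Notation C := (R[i]).
Local Open Scope sesquilinear_scope.

(* Largest eigenvalue of M^T M (0 when M has no columns). *)
Definition eigmax r c (M : 'M[R]_(r, c)) : R := \big[Num.max/0]_(i < c) eig M i.

Lemma eigmax_ge0 r c (M : 'M[R]_(r, c)) : 0 <= eigmax M.
Proof. exact: bigmax_ge_id. Qed.

Lemma eig_le_eigmax r c (M : 'M[R]_(r, c)) i : eig M i <= eigmax M.
Proof. exact: le_bigmax. Qed.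

Lemma eigmax_attained r c (M : 'M[R]_(r, c)) : (0 < c)%N -> exists i, eigmax M = eig M i.
Proof.
move=> c_gt0.
have [i _ max_i] := eq_bigmax (Ordinal c_gt0) predT (eig M) isT (fun i _ => eig_ge0 M i).
by exists i; exact: max_i.
Qed.

Lemma eigmax_dim0 r c (M : 'M[R]_(r, c)) : c = 0%N -> eigmax M = 0.
Proof. by move=> c0; rewrite /eigmax; move: (eig M); rewrite c0 => F; rewrite big_ord0. Qed.

Lemma eigen_form_le r c k (M : 'M[R]_(r, c)) (f : 'I_k -> 'I_c) (a s : R) (y : 'rV[C]_k) :
  injective f -> (forall i, a * eig M (f i) <= s) ->
  a * cnorm2 (y *m rowsub f (eigvecs M) *m (cmx M)^T) <= s * cnorm2 y.
Proof.
move=> f_inj le_s; rewrite eigen_coords_form // /cnorm2 !mulr_sumr.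
apply: ler_sum => i _; rewrite mulrA; apply: ler_wpM2r; [exact: cabs2_ge0 | exact: le_s].
Qed.

Lemma eigen_form_gt r c k (M : 'M[R]_(r, c)) (f : 'I_k -> 'I_c) (t : R) (y : 'rV[C]_k) :
  injective f -> (forall i, t < eig M (f i)) -> y != 0 ->
  t * cnorm2 y < cnorm2 (y *m rowsub f (eigvecs M) *m (cmx M)^T).
Proof.
move=> f_inj gt_t y_neq0; rewrite eigen_coords_form // /cnorm2 mulr_sumr.
have [i0 yi0] : exists i0, y 0 i0 != 0.
  apply/existsP; apply: contraR y_neq0; rewrite negb_exists => /forallP y0.
  by apply/eqP/rowP => i; rewrite mxE; apply/eqP/negPn/y0.
rewrite (bigD1 i0) //= [X in _ < X](bigD1 i0) //=; apply: ltr_leD.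
  by rewrite ltr_pM2r // lt_def cabs2_eq0 yi0 cabs2_ge0.
apply: ler_sum => i _; apply: ler_wpM2r; [exact: cabs2_ge0 | exact: ltW].
Qed.

Lemma rowsub_id c (U : 'M[C]_c) : rowsub id U = U.
Proof. by apply/matrixP => i j; rewrite mxE. Qed.

Lemma rayleigh_le r c (M : 'M[R]_(r, c)) (v : 'rV[R]_c) :
  rnorm2 (v *m M^T) <= eigmax M * rnorm2 v.
Proof.
have U_unitary := eigvecs_unitary M.
pose y := cmx v *m (eigvecs M)^t*.
have vy : cmx v = y *m rowsub id (eigvecs M) by rewrite rowsub_id mulmxKtV.
have -> : rnorm2 (v *m M^T) = cnorm2 (cmx v *m (cmx M)^T).
  by rewrite -cnorm2_cmx /cmx map_mxM map_trmx.
rewrite -cnorm2_cmx vy (cnorm2_unitary y); last by rewrite rowsub_id.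
rewrite -[X in X <= _]mul1r.
by apply: eigen_form_le => // i; rewrite mul1r eig_le_eigmax.
Qed.

Lemma rnorm2_normalize k (v : 'rV[R]_k) : 0 < rnorm2 v ->
  exists w : 'rV[R]_k, rnorm2 w = 1 /\
    forall l (K : 'M[R]_(k, l)), rnorm2 (w *m K) = rnorm2 (v *m K) / rnorm2 v.
Proof.
move=> v_gt0; exists ((Num.sqrt (rnorm2 v))^-1 *: v); split.
  by rewrite rnorm2Z exprVn sqr_sqrtr ?ltW // mulVf // gt_eqF.
by move=> l K; rewrite -scalemxAl rnorm2Z exprVn sqr_sqrtr ?ltW // mulrC.
Qed.

(* The Rayleigh bound is attained by a real unit vector: take a top eigenvector
   of the complexified Gram matrix; its real and imaginary parts both attain the
   bound, and one of them is nonzero. *)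
Lemma rayleigh_attained r c (M : 'M[R]_(r, c)) : (0 < c)%N ->
  exists w : 'rV[R]_c, rnorm2 w = 1 /\ rnorm2 (w *m M^T) = eigmax M.
Proof.
move=> c_gt0; have [i0 max_i0] := eigmax_attained M c_gt0.
pose u := row i0 (eigvecs M).
have u1 : rnorm2 (remx u) + rnorm2 (immx u) = 1.
  rewrite -cnorm2_split; apply: complexI; rewrite -cnorm2E.
  have /unitarymxP UU := eigvecs_unitary M.
  have -> : (u *m u ^t*) 0 0 = (eigvecs M *m (eigvecs M) ^t*) i0 i0.
    by rewrite !mxE; apply: eq_bigr => j _; rewrite !mxE.
  by rewrite UU mxE eqxx.
have uM : rnorm2 (remx u *m M^T) + rnorm2 (immx u *m M^T) = eigmax M.
  by rewrite -cnorm2_mul_cmx /cmx -map_trmx -/(cmx M) max_i0 /eig eigdiag_form.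
have le_re := rayleigh_le M (remx u); have le_im := rayleigh_le M (immx u).
have Lsplit : eigmax M = eigmax M * rnorm2 (remx u) + eigmax M * rnorm2 (immx u).
  by rewrite -mulrDr u1 mulr1.
have eq_re : rnorm2 (remx u *m M^T) = eigmax M * rnorm2 (remx u) by lra.
have eq_im : rnorm2 (immx u *m M^T) = eigmax M * rnorm2 (immx u) by lra.
have [re_gt0|re_le0] := ltrP 0 (rnorm2 (remx u)).
  have [w [w1 wK]] := rnorm2_normalize re_gt0; exists w; split => //.
  by rewrite wK eq_re mulfK // gt_eqF.
have re0 : rnorm2 (remx u) = 0 by apply/eqP; rewrite eq_le re_le0 rnorm2_ge0.
have im1 : rnorm2 (immx u) = 1 by lra.
by exists (immx u); rewrite eq_im im1 mulr1.
Qed.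

Lemma eigmax_le r c (M : 'M[R]_(r, c)) b : 0 <= b ->
  (forall v : 'rV[R]_c, rnorm2 (v *m M^T) <= b * rnorm2 v) -> eigmax M <= b.
Proof.
move=> b_ge0 bound; have [c0|c_gt0] := posnP c.
  by rewrite eigmax_dim0.
have [w [w1 wM]] := rayleigh_attained M c_gt0.
by rewrite -wM -[b]mulr1 -w1 bound.
Qed.

Lemma cap_neq0 (F : fieldType) k k' c (W : 'M[F]_(k, c)) (W' : 'M[F]_(k', c)) :
  (c < \rank W + \rank W')%N -> exists2 x : 'rV[F]_c, x != 0 & (x <= W)%MS && (x <= W')%MS.
Proof.
move=> dim_gt; have sum_cap := mxrank_sum_cap W W'; have sum_le := rank_leq_col (W + W')%MS.
have /rowV0Pn[x x_cap x_neq0] : (W :&: W')%MS != 0.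
  by rewrite -mxrank_eq0 -lt0n; lia.
by exists x => //; rewrite (submx_trans x_cap (capmxSl _ _)) (submx_trans x_cap (capmxSr _ _)).
Qed.

(* Otherwise the
   span of the eigenvectors of M above t meets that of the eigenvectors of N not
   above t/a, and a common nonzero vector violates the hypothesis. *)
Lemma eig_count_le r r' c (M : 'M[R]_(r, c)) (N : 'M[R]_(r', c)) (a t : R) :
  (forall v : 'rV[R]_c, rnorm2 (v *m M^T) <= a * rnorm2 (v *m N^T)) ->
  (#|[pred i | (t < eig M i)%R]| <= #|[pred i | (t < a * eig N i)%R]|)%N.
Proof.
move=> MN; set S := [pred i | t < eig M i]; set T := [pred i | t < a * eig N i].
rewrite leqNgt; apply/negP => ST.
pose f : 'I_#|S| -> 'I_c := enum_val; pose g : 'I_#|[predC T]| -> 'I_c := enum_val.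
have f_inj : injective f := @enum_val_inj _ _; have g_inj : injective g := @enum_val_inj _ _.
pose W := rowsub f (eigvecs M); pose W' := rowsub g (eigvecs N).
have W_unitary : W \is unitarymx by apply: rowsub_unitary => //; exact: eigvecs_unitary.
have W'_unitary : W' \is unitarymx by apply: rowsub_unitary => //; exact: eigvecs_unitary.
have dim_gt : (c < \rank W + \rank W')%N.
  by rewrite !mxrank_unitary // -{1}(card_ord c) -(cardC T) ltn_add2r.
have [x x_neq0 /andP[/submxP[y xy] /submxP[z xz]]] := cap_neq0 dim_gt.
have xMN : cnorm2 (x *m (cmx M)^T) <= a * cnorm2 (x *m (cmx N)^T).
  by rewrite /cmx !map_trmx !cnorm2_mul_cmx mulrDr lerD.
have lt_M : t * cnorm2 x < cnorm2 (x *m (cmx M)^T).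
  rewrite xy (cnorm2_unitary y) //; apply: eigen_form_gt => //.
    by move=> i; have := enum_valP i.
  by apply: contraNneq x_neq0 => y0; rewrite xy y0 mul0mx.
have le_N : a * cnorm2 (x *m (cmx N)^T) <= t * cnorm2 x.
  rewrite xz (cnorm2_unitary z) //; apply: eigen_form_le => // i.
  by have := enum_valP i; rewrite inE /= -leNgt.
by have := lt_le_trans lt_M (le_trans xMN le_N); rewrite ltxx.
Qed.

End Rayleigh.

Lemma char_poly_similar (F : comNzRingType) k (P Q D : 'M[F]_k) :
  Q *m P = 1%:M -> char_poly (Q *m D *m P) = char_poly D.
Proof.
move=> QP; rewrite /char_poly /char_poly_mx.
have -> : 'X%:M - map_mx polyC (Q *m D *m P) =
    map_mx polyC Q *m ('X%:M - map_mx polyC D) *m map_mx polyC P.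
  rewrite mulmxBr mulmxBl !map_mxM; congr (_ - _).
  by rewrite scalar_mxC -mulmxA -map_mxM QP map_mx1 mulmx1.
by rewrite !det_mulmx mulrAC -det_mulmx -map_mxM QP map_mx1 det1 mul1r.
Qed.

Section SingularValues.
Variable R : realType.

Lemma char_poly_gram r c (M : 'M[R]_(r, c)) :
  char_poly (M^T *m M) = \prod_(i < c) ('X - (eig M i)%:P).
Proof.
apply: (@map_poly_inj _ _ (real_complex R)).
rewrite map_char_poly map_mxM -map_trmx -/(cmx M) -/(gram M) gram_spectral.
rewrite char_poly_similar ?eigvecs_left // char_poly_trig ?diag_mx_is_trig //.
rewrite rmorph_prod; apply: eq_bigr => i _.
by rewrite mxE eqxx mulr1n eigdiagE -map_polyXsubC.
Qed.

Definition eigs r c (M : 'M[R]_(r, c)) : seq R := [seq eig M i | i <- index_enum 'I_c].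

(* The square roots of the eigenvalues of M^T M form a valid list of singular
   values; hence the chosen list [svals M] meets the specification. *)
Lemma svals_spec r c (M : 'M[R]_(r, c)) : is_svals M (svals M).
Proof.
apply: xgetPex; exists [seq Num.sqrt x | x <- eigs M]; split.
- by rewrite !size_map -[in RHS](card_ord c) cardT enumT.
- by apply/allP => x /mapP [y _ ->]; rewrite sqrtr_ge0.
rewrite char_poly_gram !big_map; apply: eq_bigr => i _.
by rewrite sqr_sqrtr // eig_ge0.
Qed.

Lemma svals_sqr_perm r c (M : 'M[R]_(r, c)) :
  perm_eq [seq x ^+ 2 | x <- svals M] (eigs M).
Proof.
have [_ _ char_svals] := svals_spec M.
by apply: prod_XsubC_eq; rewrite !big_map -char_svals char_poly_gram.
Qed.

Lemma svals_ge0 r c (M : 'M[R]_(r, c)) x : x \in svals M -> 0 <= x.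
Proof. by have [_ /allP svals_nneg _] := svals_spec M; exact: svals_nneg. Qed.

Lemma sum_svals r c (M : 'M[R]_(r, c)) (F : R -> R) :
  \sum_(x <- svals M) F x = \sum_(i < c) F (Num.sqrt (eig M i)).
Proof.
transitivity (\sum_(x <- svals M) F (Num.sqrt (x ^+ 2))).
  by apply: eq_big_seq => x x_sval; rewrite sqrtr_sqr ger0_norm ?(svals_ge0 x_sval).
rewrite -(big_map (fun x => x ^+ 2) xpredT (fun y => F (Num.sqrt y))).
by rewrite (perm_big _ (svals_sqr_perm M)) big_map.
Qed.

Lemma schatten_finE r c (M : 'M[R]_(r, c)) k :
  schatten (SFin k) M = powR (\sum_(i < c) Num.sqrt (eig M i) ^+ k) (k%:R)^-1.
Proof. by rewrite /= sum_svals. Qed.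

Lemma schatten_infE r c (M : 'M[R]_(r, c)) : schatten SInf M = Num.sqrt (eigmax M).
Proof.
apply/eqP; rewrite eq_le; apply/andP; split.
  rewrite /schatten big_seq; apply: bigmax_le => [|x x_sval]; first exact: sqrtr_ge0.
  rewrite -[x]ger0_norm ?(svals_ge0 x_sval) // -sqrtr_sqr ler_wsqrtr //.
  have : x ^+ 2 \in eigs M.
    by rewrite -(perm_mem (svals_sqr_perm M)); apply: (map_f (fun x => x ^+ 2)).
  by move=> /mapP [i _ ->]; exact: eig_le_eigmax.
have [c0|c_gt0] := posnP c.
  by rewrite eigmax_dim0 // sqrtr0 bigmax_ge_id.
have [i ->] := eigmax_attained M c_gt0.
have : eig M i \in [seq x ^+ 2 | x <- svals M].
  by rewrite (perm_mem (svals_sqr_perm M)); apply: map_f; exact: mem_index_enum.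
move=> /mapP [x x_sval ->]; rewrite sqrtr_sqr ger0_norm ?(svals_ge0 x_sval) //.
exact: le_bigmax_seq.
Qed.

(* Trace identity: the eigenvalues of M^T M sum to the squared Frobenius norm. *)
Lemma sum_eig r c (M : 'M[R]_(r, c)) :
  \sum_(i < c) eig M i = \sum_(j < r) \sum_(i < c) M j i ^+ 2.
Proof.
apply: complexI; rewrite !rmorph_sum.
transitivity (\sum_i eigdiag M 0 i); first by apply: eq_bigr => i _; rewrite eigdiagE.
rewrite -mxtrace_diag -gram_diag mxtrace_mulC mulmxA eigvecs_left mul1mx.
under [RHS]eq_bigr do rewrite rmorph_sum.
rewrite exchange_big /mxtrace; apply: eq_bigr => i _; rewrite mxE.
by apply: eq_bigr => j _; rewrite !mxE rmorphXn expr2.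
Qed.

Lemma schatten2E r c (M : 'M[R]_(r, c)) :
  schatten (SFin 2) M = Num.sqrt (\sum_(j < r) \sum_(i < c) M j i ^+ 2).
Proof.
rewrite schatten_finE -sum_eig; under eq_bigr do rewrite sqr_sqrtr ?eig_ge0 //.
by rewrite powR12_sqrt // sumr_ge0 // => i _; exact: eig_ge0.
Qed.

End SingularValues.

Section SchattenInequalities.
Variable R : realType.

Lemma seq_max_exists (s : seq R) : s != [::] ->
  exists2 x, x \in s & forall z, z \in s -> z <= x.
Proof.
elim: s => [//|a s IH] _; case: s IH => [|b s] IH.
  by exists a; rewrite ?mem_head // => z; rewrite inE => /eqP->.
have [x x_s x_max] := IH isT; have [a_le_x|x_lt_a] := leP a x.
  exists x; first by rewrite in_cons x_s orbT.
  by move=> z; rewrite in_cons => /orP[/eqP->|/x_max].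
exists a; first exact: mem_head.
by move=> z; rewrite in_cons => /orP[/eqP->//|/x_max z_le_x]; exact: le_trans z_le_x (ltW x_lt_a).
Qed.

(* Pair off the maxima of s and u and induct. *)
Lemma sum_le_of_count_le (f : R -> R) : {homo f : x y / x <= y} ->
  forall k (s u : seq R), size s = k -> size u = k ->
  (forall t, (count (fun x => (t < x)%R) s <= count (fun x => (t < x)%R) u)%N) ->
  \sum_(x <- s) f x <= \sum_(x <- u) f x.
Proof.
move=> f_mono; elim=> [|k IH] s u s_size u_size counts.
  by move: s_size u_size => /size0nil -> /size0nil ->; rewrite !big_nil.
have [x x_s x_max] : exists2 x, x \in s & forall z, z \in s -> z <= x.
  by apply: seq_max_exists; move: s_size; case: (s).
have [y y_u y_max] : exists2 y, y \in u & forall z, z \in u -> z <= y.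
  by apply: seq_max_exists; move: u_size; case: (u).
have none_above (v : seq R) z : (forall w, w \in v -> w <= z) ->
    count (fun w => (z < w)%R) v = 0%N.
  move=> v_le; apply/eqP; rewrite -leqn0 leqNgt -has_count.
  by apply/hasPn => w /v_le; rewrite -leNgt.
have x_le_y : x <= y.
  rewrite leNgt; apply/negP => y_lt_x; have := counts y.
  by rewrite (none_above u) // leqNgt -has_count => /negP[]; apply/hasP; exists x.
have s_perm := perm_to_rem x_s; have u_perm := perm_to_rem y_u.
rewrite (perm_big _ s_perm) (perm_big _ u_perm) !big_cons; apply: lerD; first exact: f_mono.
apply: IH; rewrite ?size_rem ?s_size ?u_size // => t; have := counts t.
rewrite (permP s_perm) (permP u_perm) /=; have [t_lt_x|x_le_t] := ltP t x.
  by rewrite (lt_le_trans t_lt_x x_le_y) /= !add1n ltnS.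
by move=> _; rewrite none_above // => z /mem_rem /x_max /le_trans; apply.
Qed.

Lemma count_map_card (T : Type) c (P : pred T) (F : 'I_c -> T) :
  count P [seq F i | i <- index_enum 'I_c] = #|[pred i | P (F i)]|.
Proof. by rewrite count_map cardE size_filter /enum_mem. Qed.

Lemma opn_ge0 r c (M : 'M[R]_(r, c)) : 0 <= opn M.
Proof. by rewrite schatten_infE sqrtr_ge0. Qed.

Lemma opn_rayleigh r c (M : 'M[R]_(r, c)) (v : 'rV[R]_c) :
  rnorm2 (v *m M^T) <= opn M ^+ 2 * rnorm2 v.
Proof. by rewrite schatten_infE sqr_sqrtr ?eigmax_ge0 //; exact: rayleigh_le. Qed.

Lemma opn_le r c (M : 'M[R]_(r, c)) b : 0 <= b ->
  (forall v : 'rV[R]_c, rnorm2 (v *m M^T) <= b ^+ 2 * rnorm2 v) -> opn M <= b.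
Proof.
move=> b_ge0 bound; rewrite schatten_infE -(ger0_norm b_ge0) -sqrtr_sqr ler_wsqrtr //.
by apply: eigmax_le => //; exact: sqr_ge0.
Qed.

Lemma opn_mulmx r c d (A : 'M[R]_(r, c)) (B : 'M[R]_(c, d)) :
  opn (A *m B) <= opn A * opn B.
Proof.
apply: opn_le => [|v]; first by rewrite mulr_ge0 ?opn_ge0.
rewrite trmx_mul mulmxA exprMn -mulrA; apply: le_trans (opn_rayleigh _ _) _.
by apply: ler_wpM2l; [exact: sqr_ge0 | exact: opn_rayleigh].
Qed.

Lemma powR_root (x : R) k : 0 <= x -> (0 < k)%N -> (x ^+ k) `^ (k%:R)^-1 = x.
Proof.
move=> x_ge0 k_gt0; rewrite -powR_mulrn // -powRrM mulfV ?powRr1 //.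
by rewrite pnatr_eq0 -lt0n.
Qed.

Lemma sum_sqrt_eig_ge0 r c (M : 'M[R]_(r, c)) k :
  0 <= \sum_(i < c) Num.sqrt (eig M i) ^+ k.
Proof. by rewrite sumr_ge0 // => i _; rewrite exprn_ge0 ?sqrtr_ge0. Qed.

(* ||M||_oo <= ||M||_p: the largest term of a sum of nonnegative terms. *)
Lemma opn_le_schatten r c (M : 'M[R]_(r, c)) k : (0 < k)%N ->
  opn M <= schatten (SFin k) M.
Proof.
move=> k_gt0; rewrite schatten_infE schatten_finE.
have [c0|c_gt0] := posnP c; first by rewrite eigmax_dim0 // sqrtr0 powR_ge0.
have [i ->] := eigmax_attained M c_gt0.
rewrite -[X in X <= _](powR_root (sqrtr_ge0 _) k_gt0).
apply: ge0_ler_powR; rewrite ?invr_ge0 ?ler0n ?nnegrE ?exprn_ge0 ?sqrtr_ge0 ?sum_sqrt_eig_ge0 //.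
by rewrite (bigD1 i) //= lerDl sumr_ge0 // => j _; rewrite exprn_ge0 ?sqrtr_ge0.
Qed.

(* ||M||_p <= c^(1/p) ||M||_oo: each of the c terms is at most ||M||_oo^p. *)
Lemma schatten_le_opn r c (M : 'M[R]_(r, c)) k : (0 < k)%N ->
  schatten (SFin k) M <= powR (c%:R) (k%:R)^-1 * opn M.
Proof.
move=> k_gt0; rewrite schatten_finE.
have sum_le : \sum_(i < c) Num.sqrt (eig M i) ^+ k <= c%:R * opn M ^+ k.
  apply: le_trans (_ : _ <= \sum_(i < c) opn M ^+ k) _; last first.
    by rewrite sumr_const card_ord mulr_natl.
  apply: ler_sum => i _.
  rewrite schatten_infE; apply: lerXn2r; rewrite ?nnegrE ?sqrtr_ge0 //.
  by rewrite ler_wsqrtr // eig_le_eigmax.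
apply: le_trans (ge0_ler_powR _ _ _ sum_le) _;
  rewrite ?invr_ge0 ?ler0n ?nnegrE ?sum_sqrt_eig_ge0 ?mulr_ge0 ?ler0n ?exprn_ge0 ?opn_ge0 //.
by rewrite powRM ?ler0n ?exprn_ge0 ?opn_ge0 // powR_root ?opn_ge0.
Qed.

(* ||A Y||_p <= ||A||_oo ||Y||_p: since |A Y v| <= ||A||_oo |Y v|, the spectrum of
   (AY)^T(AY) is dominated by that of ||A||_oo^2 Y^T Y (eig_count_le), and the
   p-th powers of the square roots are summed by majorisation. *)
Lemma schatten_mulmxl r c d (A : 'M[R]_(r, c)) (Y : 'M[R]_(c, d)) k : (0 < k)%N ->
  schatten (SFin k) (A *m Y) <= opn A * schatten (SFin k) Y.
Proof.
move=> k_gt0; rewrite !schatten_finE; set a := opn A.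
have a_ge0 : 0 <= a := opn_ge0 A.
have major : \sum_(i < d) Num.sqrt (eig (A *m Y) i) ^+ k <=
             \sum_(i < d) Num.sqrt (a ^+ 2 * eig Y i) ^+ k.
  have := @sum_le_of_count_le (fun y => Num.sqrt y ^+ k) _ d (eigs (A *m Y))
     [seq a ^+ 2 * y | y <- eigs Y].
  rewrite /eigs !big_map; apply.
  - move=> x y x_le_y /=; apply: lerXn2r; rewrite ?nnegrE ?sqrtr_ge0 //.
    exact: ler_wsqrtr.
  - by rewrite size_map -[in RHS](card_ord d) cardT enumT.
  - by rewrite !size_map -[in RHS](card_ord d) cardT enumT.
  move=> t; rewrite -map_comp !count_map_card; apply: eig_count_le.
  by move=> v; rewrite trmx_mul mulmxA; exact: opn_rayleigh.
have factor_a : \sum_(i < d) Num.sqrt (a ^+ 2 * eig Y i) ^+ k =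
                a ^+ k * \sum_(i < d) Num.sqrt (eig Y i) ^+ k.
  rewrite mulr_sumr; apply: eq_bigr => i _.
  by rewrite sqrtrM ?sqr_ge0 // sqrtr_sqr ger0_norm // exprMn.
apply: le_trans (ge0_ler_powR _ _ _ major) _; rewrite ?invr_ge0 ?ler0n ?nnegrE ?sum_sqrt_eig_ge0 //.
  by rewrite sumr_ge0 // => j _; rewrite exprn_ge0 ?sqrtr_ge0.
by rewrite factor_a powRM ?exprn_ge0 ?sum_sqrt_eig_ge0 // powR_root.
Qed.

End SchattenInequalities.

Section BlockStructure.
Variable R : realType.
Variables (n m : nat) (nb : nat -> nat).
Hypothesis Hnb : block_struct n m nb.

Definition in_block (j i : nat) : bool := (nb j <= i < nb j.+1)%N.

Lemma nb_mono a b : (a <= b <= m)%N -> (nb a <= nb b)%N.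
Proof.
case: Hnb => _ _ nb_incr /andP[a_le_b b_le_m].
elim: b a_le_b b_le_m => [|b IH]; first by rewrite leqn0 => /eqP->.
rewrite leq_eqVlt => /orP[/eqP->//|]; rewrite ltnS => a_le_b b_lt_m.
exact: leq_trans (IH a_le_b (ltnW b_lt_m)) (ltnW (nb_incr _ b_lt_m)).
Qed.

Lemma block_exists i : (i < n)%N -> exists j : 'I_m, in_block j i.
Proof.
case: Hnb => nb0 nbm _; rewrite -nbm => i_lt.
suff : forall k, (k <= m)%N -> (i < nb k)%N -> exists2 j, (j < k)%N & in_block j i.
  by move=> /(_ m (leqnn m) i_lt) [j j_lt i_j]; exists (Ordinal j_lt).
elim=> [|k IH] k_le; first by rewrite nb0.
have [i_lt_k|k_le_i] := ltnP i (nb k).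
  by have [j j_lt i_j] := IH (ltnW k_le) i_lt_k; exists j => //; exact: ltnW.
by move=> i_lt_k1; exists k => //; rewrite /in_block k_le_i i_lt_k1.
Qed.

Lemma block_uniq (j1 j2 : 'I_m) i : in_block j1 i -> in_block j2 i -> j1 = j2.
Proof.
wlog j1_le_j2 : j1 j2 / (j1 <= j2)%N.
  by move=> W; have [/W//|/ltnW/W W21 i1 i2] := leqP j1 j2; exact/esym/W21.
move=> /andP[lo1 hi1] /andP[lo2 hi2]; apply/val_inj/eqP; rewrite eqn_leq j1_le_j2 /=.
rewrite leqNgt; apply/negP => j1_lt_j2.
have := @nb_mono j1.+1 j2; rewrite j1_lt_j2 ltnW //= => /(_ isT) nb_le.
by move: (leq_trans hi1 nb_le); rewrite ltnNge lo2.
Qed.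

Lemma sum_in_block (i : 'I_n) : exists2 j0 : 'I_m, in_block j0 i &
  forall F : 'I_m -> R, \sum_(j < m) (in_block j i)%:R * F j = F j0.
Proof.
have [j0 i_j0] := block_exists (ltn_ord i); exists j0 => // F.
rewrite (bigD1 j0) //= i_j0 mul1r big1 ?addr0 // => j j_neq.
have [i_j|] := boolP (in_block j i); last by rewrite mul0r.
by rewrite (block_uniq i_j i_j0) eqxx in j_neq.
Qed.

Lemma rnorm2_blocks (v : 'rV[R]_n) :
  \sum_(j < m) \sum_(i < n) (in_block j i)%:R * v 0 i ^+ 2 = rnorm2 v.
Proof.
rewrite exchange_big; apply: eq_bigr => i _; have [j0 _ collapse] := sum_in_block i.
exact: (collapse (fun=> v 0 i ^+ 2)).
Qed.

Section BlockNormaliser.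
Variable w : 'rV[R]_n.

Definition wblk (j : nat) : R := Num.sqrt (\sum_(i < n) (in_block j i)%:R * w 0 i ^+ 2).
Definition Xw : 'M[R]_(n, m) := \matrix_(i < n, j < m) ((in_block j i)%:R * (w 0 i / wblk j)).
Definition wblk_row : 'rV[R]_m := \row_j wblk j.

Lemma wblk_sqr j : wblk j ^+ 2 = \sum_(i < n) (in_block j i)%:R * w 0 i ^+ 2.
Proof. by rewrite sqr_sqrtr // sumr_ge0 // => i _; rewrite mulr_ge0 ?ler0n ?sqr_ge0. Qed.

Lemma Xw_Db : in_Db nb Xw.
Proof. by move=> i j i_out; rewrite mxE /in_block (negbTE i_out) mul0r. Qed.

(* The columns of Xw are orthogonal with norms at most 1. *)
Lemma Xw_opn : opn Xw <= 1.
Proof.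
apply: opn_le => // v; rewrite expr1n mul1r.
have entry i : (v *m Xw^T) 0 i ^+ 2 =
    \sum_(j < m) (in_block j i)%:R * (v 0 j ^+ 2 * (w 0 i ^+ 2 / wblk j ^+ 2)).
  have [j0 _ collapse] := sum_in_block i.
  rewrite mxE (eq_bigr (fun j : 'I_m => (in_block j i)%:R * (v 0 j * (w 0 i / wblk j))));
    last first.
    by move=> j _; rewrite !mxE mulrCA.
  by rewrite !collapse exprMn expr_div_n.
rewrite /rnorm2 (eq_bigr _ (fun i _ => entry i)) exchange_big; apply: ler_sum => j _.
under eq_bigr do rewrite mulrCA; rewrite -mulr_sumr -[X in _ <= X]mulr1.
apply: ler_wpM2l; first exact: sqr_ge0.
under eq_bigr do rewrite mulrA; rewrite -mulr_suml -wblk_sqr.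
by have [->|wj_neq0] := eqVneq (wblk j) 0; rewrite ?expr0n ?mul0r ?divff ?expf_neq0.
Qed.

Lemma wblk_row_Xw : wblk_row *m Xw^T = w.
Proof.
apply/rowP => i; have [j0 i_j0 collapse] := sum_in_block i.
rewrite !mxE (eq_bigr (fun j : 'I_m => (in_block j i)%:R * (wblk j * (w 0 i / wblk j))));
  last first.
  by move=> j _; rewrite !mxE mulrCA.
rewrite collapse; have [wj0_0|wj0_neq0] := eqVneq (wblk j0) 0; last by rewrite mulrC mulfVK.
have : wblk j0 ^+ 2 = 0 by rewrite wj0_0 expr0n.
rewrite wblk_sqr => /eqP; rewrite psumr_eq0 => [/allP/(_ i (mem_index_enum _))|k _].
  by rewrite /= i_j0 mul1r sqrf_eq0 wj0_0 mul0r => /eqP->.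
by rewrite mulr_ge0 ?ler0n ?sqr_ge0.
Qed.

Lemma rnorm2_wblk_row : rnorm2 wblk_row = rnorm2 w.
Proof. by rewrite -rnorm2_blocks; apply: eq_bigr => j _; rewrite mxE wblk_sqr. Qed.

End BlockNormaliser.

Lemma zero_unit_Db : in_Db nb (0 : 'M[R]_(n, m)) /\ opn (0 : 'M[R]_(n, m)) <= 1.
Proof.
split=> [i j _|]; first by rewrite mxE.
apply: opn_le => // v; rewrite trmx0 mulmx0 expr1n mul1r /rnorm2 big1 ?rnorm2_ge0 //.
by move=> i _; rewrite mxE expr0n.
Qed.

(* Some X in D_b with ||X||_oo <= 1 satisfies ||A X||_oo >= ||A||_oo: normalise the
   blocks of a top right singular vector w of A, so that A X maps the unit vector
   of block norms of w to A w. *)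
Lemma exists_Db_witness (A : 'M[R]_n) :
  exists X : 'M[R]_(n, m), (in_Db nb X /\ opn X <= 1) /\ opn A <= opn (A *m X).
Proof.
have [n0|n_gt0] := posnP n.
  by exists 0; split; [exact: zero_unit_Db | rewrite schatten_infE eigmax_dim0 // sqrtr0 opn_ge0].
have [w [w1 Aw]] := rayleigh_attained A n_gt0.
exists (Xw w); split; first by split; [exact: Xw_Db | exact: Xw_opn].
have := opn_rayleigh (A *m Xw w) (wblk_row w).
rewrite rnorm2_wblk_row w1 mulr1 trmx_mul mulmxA wblk_row_Xw Aw => AX_bound.
rewrite -(ler_pXn2r (isT : (0 < 2)%N)) ?nnegrE ?opn_ge0 //.
by rewrite [opn A]schatten_infE sqr_sqrtr ?eigmax_ge0.
Qed.

End BlockStructure.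

Section BlockNorm.
Variable R : realType.
Variables (n m : nat) (nb : nat -> nat).
Local Notation unit_Db X := (in_Db nb X /\ schatten SInf X <= 1).

Lemma bnorm_ub p (A : 'M[R]_n) b (X : 'M[R]_(n, m)) :
  (forall Y : 'M[R]_(n, m), unit_Db Y -> schatten p (A *m Y) <= b) -> unit_Db X ->
  schatten p (A *m X) <= bnorm p m nb A.
Proof.
move=> bounded X_unit; apply: sup_upper_bound; last by exists X.
split; first by exists (schatten p (A *m X)); exists X.
by exists b => _ [Y Y_unit <-]; apply: bounded.
Qed.

Lemma bnorm_le p (A : 'M[R]_n) b :
  (forall X : 'M[R]_(n, m), unit_Db X -> schatten p (A *m X) <= b) -> bnorm p m nb A <= b.
Proof.
move=> bounded; apply: ge_sup; last by move=> _ [Y Y_unit <-]; apply: bounded.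
by exists (schatten p (A *m (0 : 'M[R]_(n, m)))); exists 0 => //; exact: zero_unit_Db.
Qed.

Lemma opn_mul_unit (A : 'M[R]_n) (X : 'M[R]_(n, m)) : unit_Db X -> opn (A *m X) <= opn A.
Proof.
move=> [_ X_le1]; apply: le_trans (opn_mulmx _ _) _.
by rewrite -[X in _ <= X]mulr1 ler_wpM2l // opn_ge0.
Qed.

(* The uniform bound behind part (iii): A X has m columns. *)
Lemma schatten_mul_unit k (A : 'M[R]_n) (X : 'M[R]_(n, m)) : (0 < k)%N -> unit_Db X ->
  schatten (SFin k) (A *m X) <= powR (m%:R) (k%:R)^-1 * opn A.
Proof.
move=> k_gt0 X_unit; apply: le_trans (schatten_le_opn _ k_gt0) _.
by rewrite ler_wpM2l ?powR_ge0 // opn_mul_unit.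
Qed.

Lemma bnorm_fin_le k (A : 'M[R]_n) : (0 < k)%N ->
  bnorm (SFin k) m nb A <= powR (m%:R) (k%:R)^-1 * opn A.
Proof. by move=> k_gt0; apply: bnorm_le => X; exact: schatten_mul_unit. Qed.

Lemma schatten_le_bnorm k (A : 'M[R]_n) (X : 'M[R]_(n, m)) : (0 < k)%N -> unit_Db X ->
  schatten (SFin k) (A *m X) <= bnorm (SFin k) m nb A.
Proof. by move=> k_gt0; apply: bnorm_ub => Y; exact: schatten_mul_unit. Qed.

(* Part (i): X is in the unit ball, and ||A (B X)||_p <= ||A||_oo ||B X||_p. *)
Lemma bnorm_mull k (A B : 'M[R]_n) : (0 < k)%N ->
  bnorm (SFin k) m nb (A *m B) <= opn A * bnorm (SFin k) m nb B.
Proof.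
move=> k_gt0; apply: bnorm_le => X X_unit; rewrite -mulmxA.
apply: le_trans (schatten_mulmxl _ _ k_gt0) _.
by rewrite ler_wpM2l ?opn_ge0 // schatten_le_bnorm.
Qed.

Hypothesis Hnb : block_struct n m nb.

Lemma opn_le_bnorm k (A : 'M[R]_n) : (0 < k)%N -> opn A <= bnorm (SFin k) m nb A.
Proof.
move=> k_gt0; have [X [X_unit AX_ge]] := exists_Db_witness Hnb A.
by apply: le_trans AX_ge (le_trans (opn_le_schatten _ k_gt0) _); exact: schatten_le_bnorm.
Qed.

Lemma bnorm_inf (A : 'M[R]_n) : bnorm SInf m nb A = opn A.
Proof.
apply/eqP; rewrite eq_le; apply/andP; split.
  by apply: bnorm_le => X; exact: opn_mul_unit.
have [X [X_unit AX_ge]] := exists_Db_witness Hnb A.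
by apply: le_trans AX_ge _; apply: bnorm_ub X_unit => Y; exact: opn_mul_unit.
Qed.

End BlockNorm.

Section BlockTriangular.
Variable R : realType.

Lemma mxeE r c (M : 'M[R]_(r, c)) (a : 'I_r) (b : 'I_c) : mxe M a b = M a b.
Proof. by rewrite /mxe !valK. Qed.

Lemma mxe_mulmx r c d (M : 'M[R]_(r, c)) (P : 'M[R]_(c, d)) (a : nat) (j : 'I_d) :
  mxe (M *m P) a j = \sum_(l < c) mxe M a l * P l j.
Proof.
rewrite /mxe valK /=; case: insubP => [a' _ _|_] /=.
  by rewrite mxE; apply: eq_bigr => l _; rewrite valK.
by rewrite big1 // => l _; rewrite mul0r.
Qed.

Variables (n m : nat) (nb : nat -> nat).
Hypothesis Hnb : block_struct n m nb.
Variables (A C : 'M[R]_n) (Bs : forall j : nat, 'M[R]_(nb j.+1)).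
Hypothesis C_upper : forall (i k : 'I_n) (bi bj : nat), (bj < bi)%N -> (bi < m)%N ->
  (nb bi <= i < nb bi.+1)%N -> (nb bj <= k < nb bj.+1)%N -> C i k = 0.
Hypothesis C_cols : forall (j : nat) (i k : nat), (j < m)%N -> (i < nb j.+1)%N ->
  (nb j <= k < nb j.+1)%N -> mxe C i k = \sum_(l < nb j.+1) mxe (Bs j) i l * mxe A l k.
Variable X : 'M[R]_(n, m).
Hypothesis X_Db : in_Db nb X.
Variable j : 'I_m.

(* Column j of C X only involves block column j of C, i.e. B_j applied to the
   top nb (j+1) entries of column j of A X, and zeros below. *)
Local Notation N := (nb j.+1).

Lemma nb_le_n : (N <= n)%N.
Proof. by case: Hnb => _ <- _; apply: (nb_mono Hnb); rewrite ltn_ord leqnn. Qed.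

Lemma CX_below (k : nat) : (k < n)%N -> (N <= k)%N -> mxe (C *m X) k j = 0.
Proof.
move=> k_lt_n N_le_k; rewrite mxe_mulmx big1 // => l _.
have [b k_b] := block_exists Hnb k_lt_n.
have j_lt_b : (j < b)%N.
  rewrite ltnNge; apply/negP => b_le_j; move: k_b => /andP[_ k_lt].
  have := @nb_mono _ _ _ Hnb b.+1 j.+1; rewrite ltnS b_le_j ltn_ord => /(_ isT) nb_le.
  by move: (leq_trans k_lt nb_le); rewrite ltnNge N_le_k.
have [l_j|l_out] := boolP (in_block nb j l); last by rewrite X_Db ?mulr0.
by rewrite -[k]/(val (Ordinal k_lt_n)) mxeE (C_upper (bi := b) (bj := j)) ?mul0r.
Qed.

Lemma CX_top (k : nat) : (k < N)%N ->
  mxe (C *m X) k j = \sum_(l < N) mxe (Bs j) k l * mxe (A *m X) l j.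
Proof.
move=> k_lt_N; rewrite mxe_mulmx.
transitivity (\sum_(l < n) (\sum_(l' < N) mxe (Bs j) k l' * mxe A l' l) * X l j).
  apply: eq_bigr => l _; have [l_j|l_out] := boolP (in_block nb j l).
    by rewrite (C_cols (j := j)).
  by rewrite X_Db ?mulr0.
under eq_bigr do rewrite mulr_suml.
rewrite exchange_big; apply: eq_bigr => l' _.
by rewrite mxe_mulmx mulr_sumr; apply: eq_bigr => l _; rewrite mulrA.
Qed.

Lemma sum_col_top (F : nat -> R) : (forall k, (N <= k < n)%N -> F k = 0) ->
  \sum_(k < n) F k = \sum_(k < N) F k.
Proof.
move=> F_out; rewrite (bigID (fun k : 'I_n => (k < N)%N)) /= [X in _ + X]big1 ?addr0.
  by rewrite -(big_ord_widen _ F nb_le_n).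
by move=> k; rewrite -leqNgt => N_le_k; rewrite F_out // N_le_k ltn_ord.
Qed.

Lemma CX_col_bound : \sum_(k < n) (C *m X) k j ^+ 2 <=
  opn (Bs j) ^+ 2 * \sum_(k < n) (A *m X) k j ^+ 2.
Proof.
pose y : 'rV[R]_N := \row_(l < N) mxe (A *m X) l j.
have CX_norm : \sum_(k < n) (C *m X) k j ^+ 2 = rnorm2 (y *m (Bs j)^T).
  under eq_bigr do rewrite -mxeE.
  rewrite (@sum_col_top (fun k => mxe (C *m X) k j ^+ 2)); last first.
    by move=> k /andP[N_le_k k_lt_n]; rewrite CX_below // expr0n.
  apply: eq_bigr => k _; rewrite CX_top // !mxE; congr (_ ^+ 2).
  by apply: eq_bigr => l _; rewrite !mxE mxeE mulrC.
rewrite CX_norm; apply: le_trans (opn_rayleigh _ _) _; apply: ler_wpM2l; first exact: sqr_ge0.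
under [X in _ <= X]eq_bigr do rewrite -mxeE.
rewrite (bigID (fun k : 'I_n => (k < N)%N)) /=.
rewrite -(big_ord_widen _ (fun k => mxe (A *m X) k j ^+ 2) nb_le_n).
rewrite /rnorm2 (eq_bigr (fun k : 'I_N => mxe (A *m X) k j ^+ 2)) => [|k _]; last by rewrite mxE.
by rewrite lerDl sumr_ge0 // => k _; rewrite sqr_ge0.
Qed.

End BlockTriangular.

(* Part (iv): summing the column estimates, ||C X||_2 <= (max_j ||B_j||_oo) ||A X||_2
   for every X in the unit ball of D_b. *)
Lemma bnorm2_block_triangular (R : realType) n m nb (Hnb : block_struct n m nb)
  (A C : 'M[R]_n) (Bs : forall j : nat, 'M[R]_(nb j.+1)) :
  (forall (i k : 'I_n) (bi bj : nat), (bj < bi)%N -> (bi < m)%N ->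
      (nb bi <= i < nb bi.+1)%N -> (nb bj <= k < nb bj.+1)%N -> C i k = 0) ->
  (forall (j : nat) (i k : nat), (j < m)%N -> (i < nb j.+1)%N ->
      (nb j <= k < nb j.+1)%N -> mxe C i k = \sum_(l < nb j.+1) mxe (Bs j) i l * mxe A l k) ->
  bnorm (SFin 2) m nb C <=
    (\big[Num.max/0]_(j < m) schatten SInf (Bs j)) * bnorm (SFin 2) m nb A.
Proof.
move=> C_upper C_cols; set b := \big[Num.max/0]_(j < m) schatten SInf (Bs j).
have b_ge0 : 0 <= b by exact: bigmax_ge_id.
apply: bnorm_le => X [X_Db X_le1].
have frob : \sum_(k < n) \sum_(j < m) (C *m X) k j ^+ 2 <=
            b ^+ 2 * \sum_(k < n) \sum_(j < m) (A *m X) k j ^+ 2.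
  rewrite exchange_big [X in _ <= _ * X]exchange_big mulr_sumr; apply: ler_sum => j _.
  apply: le_trans (CX_col_bound Hnb C_upper C_cols X_Db j) _.
  apply: ler_wpM2r; first by rewrite sumr_ge0 // => k _; rewrite sqr_ge0.
  apply: lerXn2r; rewrite ?nnegrE ?opn_ge0 //.
  exact: (le_bigmax _ (fun j : 'I_m => schatten SInf (Bs j))).
apply: (@le_trans _ _ (b * schatten (SFin 2) (A *m X))).
  rewrite !schatten2E -(ger0_norm b_ge0) -sqrtr_sqr -sqrtrM ?sqr_ge0 //.
  by rewrite ler_wsqrtr.
by rewrite ler_wpM2l // schatten_le_bnorm.
Qed.

Theorem mainTheorem9 (R : realType) (n m : nat) (nb : nat -> nat)
  (Hnb : block_struct n m nb) (p : nat) (Hp : (0 < p)%N) (A B : 'M[R]_n) :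
  [/\ (* (i) *)
      bnorm (SFin p) m nb (A *m B) <= schatten SInf A * bnorm (SFin p) m nb B,
      (* (ii) *)
      schatten SInf A <= bnorm (SFin p) m nb A /\
      bnorm SInf m nb A = schatten SInf A,
      (* (iii) *)
      bnorm (SFin p) m nb A <= powR (m%:R) (p%:R)^-1 * schatten SInf A &
      (* (iv) *)
      forall (C : 'M[R]_n) (Bs : forall j : nat, 'M[R]_(nb j.+1)),
        (* C is block upper triangular *)
        (forall (i k : 'I_n) (bi bj : nat), (bj < bi)%N -> (bi < m)%N ->
            (nb bi <= i < nb bi.+1)%N -> (nb bj <= k < nb bj.+1)%N -> C i k = 0) ->
        (* C(0:j, j) = B_j A(0:j, j) *)
        (forall (j : nat) (i k : nat), (j < m)%N -> (i < nb j.+1)%N ->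
            (nb j <= k < nb j.+1)%N ->
            mxe C i k = \sum_(l < nb j.+1) mxe (Bs j) i l * mxe A l k) ->
        bnorm (SFin 2) m nb C <=
          (\big[Num.max/0]_(j < m) schatten SInf (Bs j)) * bnorm (SFin 2) m nb A].
Proof.
split.
- exact: bnorm_mull.
- by split; [exact: opn_le_bnorm | exact: bnorm_inf].
- exact: bnorm_fin_le.
- by move=> C Bs C_upper C_cols; exact: bnorm2_block_triangular C_upper C_cols.
Qed.
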